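(* Let $H$ be a reduced valuation monoid with quotient group $G=\mathsf{q}(H)$, and let $X$ be a finite subset of $G$ containing the identity $1$. Then there exists a unique $a\in G$ such that $aX=\{ax: x\in X\}$ is a finite subset of $H$ containing $1$.
   Context: All monoids are written multiplicatively. A commutative monoid $H$ is cancellative if $ac=bc$ implies $a=b$ for all $a,b,c\in H$. For a commutative cancellative monoid $H$, $\mathsf{q}(H)$ denotes its quotient (Grothendieck) group, with $H\subseteq \mathsf{q}(H)$ and $\mathsf{q}(H)=\{ab^{-1}: a,b\in H\}$. A commutative cancellative monoid $H$ is a valuation monoid if for every $x\in\mathsf{q}(H)$ we have $x\in H$ or $x^{-1}\in H$; it is reduced if its only invertible element is the identity $1$. *)

From HB Require Import structures.
From mathcomp Require Export all_boot.
From mathcomp Require Export finmap.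
Set Implicit Arguments.
Unset Strict Implicit.
Unset Printing Implicit Defensive.

(* A commutative multiplicative group is encoded as a MathComp [groupType]
   together with an explicit commutativity hypothesis. *)
Open Scope group_scope.

Definition submonoid (G : groupType) (H : G -> Prop) : Prop :=
  H 1 /\ forall x y : G, H x -> H y -> H (x * y).

Definition is_quotient_group (G : groupType) (H : G -> Prop) : Prop :=
  forall g : G, exists a b : G, [/\ H a, H b & g = a * b^-1].

Definition valuation (G : groupType) (H : G -> Prop) : Prop :=
  forall x : G, H x \/ H x^-1.

Definition reduced (G : groupType) (H : G -> Prop) : Prop :=
  forall x : G, H x -> H x^-1 -> x = 1.

From mathcomp Require Import all_boot finmap.
Set Implicit Arguments.
Unset Strict Implicit.
Unset Printing Implicit Defensive.
Open Scope fset_scope.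
Open Scope group_scope.

(* In a reduced valuation monoid H, divisibility x | y, i.e. H (x^-1 * y), is a
   total order on G.  The finite set X therefore has a least element m, and
   m^-1 X lies in H and contains 1.  Conversely, if a X lies in H and
   contains 1 = a x0, then x0 divides every element of X, so x0 and m divide
   each other and a = x0^-1 = m^-1. *)

Lemma exists_least_in_cons (T : eqType) (R : T -> T -> Prop)
    (R_refl : forall x, R x x)
    (R_trans : forall x y z, R x y -> R y z -> R x z)
    (R_total : forall x y, R x y \/ R y x) (x0 : T) (s : seq T) :
  exists2 m, m \in x0 :: s & forall y, y \in x0 :: s -> R m y.
Proof.
elim: s => [|x s [m ms least_m]].
  by exists x0 => [|y]; rewrite ?mem_head // inE => /eqP ->.
have mem_cons y : y \in x0 :: x :: s -> y = x \/ y \in x0 :: s.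
  rewrite !inE => /or3P[y0 | /eqP | ys]; first by right; rewrite y0.
    by left.
  by right; rewrite ys orbT.
have [Rxm | Rmx] := R_total x m.
- exists x; first by rewrite !inE eqxx orbT.
  by move=> y /mem_cons[-> | /least_m]; [apply: R_refl | apply: R_trans].
- exists m; first by move: ms; rewrite !inE => /orP[-> | ->]; rewrite ?orbT.
  by move=> y /mem_cons[-> | /least_m].
Qed.

Section ValuationDivisibility.

Variables (G : groupType) (H : G -> Prop).
Hypotheses (Hmon : submonoid H) (Hval : valuation H) (Hred : reduced H).

Definition hdvd (x y : G) : Prop := H (x^-1 * y).

Lemma hdvd_refl x : hdvd x x.
Proof. by rewrite /hdvd mulVg; case: Hmon. Qed.

Lemma hdvd_trans x y z : hdvd x y -> hdvd y z -> hdvd x z.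
Proof.
case: Hmon => _ H_mul Hxy Hyz; have := H_mul _ _ Hxy Hyz.
by rewrite -mulgA (mulgA y) mulgV mul1g.
Qed.

Lemma hdvd_total x y : hdvd x y \/ hdvd y x.
Proof. by rewrite /hdvd -[y^-1 * x]invgK invgM invgK; apply: Hval. Qed.

Lemma hdvd_anti x y : hdvd x y -> hdvd y x -> x = y.
Proof.
rewrite /hdvd -[y^-1 * x]invgK invgM invgK => Hxy Hyx.
by apply: (mulgI x^-1); rewrite (Hred Hxy Hyx) mulVg.
Qed.

Lemma exists_hdvd_least (X : {fset G}) (x0 : G) : x0 \in X ->
  exists2 m, m \in X & forall x, x \in X -> hdvd m x.
Proof.
move=> x0X; have memX y : (y \in x0 :: enum_fset X) = (y \in X).
  by rewrite inE; case: eqP => [-> | ].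
have [m] :=
  exists_least_in_cons hdvd_refl hdvd_trans hdvd_total x0 (enum_fset X).
by rewrite memX => mX least_m; exists m => // x; rewrite -memX; apply: least_m.
Qed.

Lemma translate_in_H (a : G) (X : {fset G}) :
  (forall y, y \in [fset a * x | x in X] -> H y) <->
  (forall x, x \in X -> hdvd a^-1 x).
Proof.
rewrite /hdvd invgK; split=> [aXH x xX | Hax y /imfsetP[x /= xX ->]].
  by apply: aXH; apply/imfsetP; exists x.
exact: Hax.
Qed.

End ValuationDivisibility.

Theorem lemma1 (G : groupType) (mulC : forall x y : G, x * y = y * x)
  (H : G -> Prop) (Hmon : submonoid H) (Hq : is_quotient_group H)
  (Hval : valuation H) (Hred : reduced H)
  (X : {fset G}) (X1 : (1 : G) \in X) :
  exists! a : G,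
    (forall y : G, y \in [fset a * x | x in X] -> H y) /\
    (1 : G) \in [fset a * x | x in X].
Proof.
have [m mX least_m] := exists_hdvd_least Hmon Hval X1.
exists m^-1; split.
  split; first by apply/translate_in_H; rewrite invgK.
  by apply/imfsetP; exists m => //; rewrite mulVg.
move=> b [bX_H /imfsetP[x0 /= x0X b_x0]].
move/translate_in_H: bX_H.
have {b_x0} -> : b = x0^-1 by apply: (mulIg x0); rewrite -b_x0 mulVg.
rewrite invgK => x0_least.
by congr _^-1; apply: (hdvd_anti Hred); [apply: least_m | apply: x0_least].
Qed.
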